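(* Let $\mathfrak F$ be a Frankenstein graph and let $\mathsf P\subseteq\mathfrak F$ be a path with terminals $s$ and $t$. Then there exists a rainbow path $\mathsf P'\subseteq\mathfrak F$ with terminals $s$ and $t$.
   Context: A (colored) graph is a finite set $\mathsf G$ of pairs $(e,\alpha)$, where the $e$'s are pairwise distinct 2-element subsets of a vertex set and $\alpha$ is a color (colors may repeat). $V(\mathsf G)$ is its vertex set and $\chi(\mathsf G)$ its set of colors; $\mathsf G$ is rainbow if $|\chi(\mathsf G)|=|\mathsf G|$ and almost rainbow if $|\chi(\mathsf G)|=|\mathsf G|-1$. A subgraph is a subset. Paths, cycles, trees are colored graphs whose underlying uncolored edges form a path (two distinct terminals), cycle, or tree; lengths count edges. A long rainbow odd cycle is a rainbow cycle of odd length at least $7$. A theta graph is a union $\mathsf P_1\cup\mathsf P_2\cup\mathsf P_3$ of three paths with the same terminals $s\neq t$ such that any two share no vertex other than $s,t$ and no underlying uncolored edge. A bad piece is an almost rainbow theta graph with at least $6$ vertices that is the union of three rainbow paths as in the definition of a theta graph. A partition of a graph $\mathsf G$ is a collection $\{\mathsf G_1,\dots,\mathsf G_m\}$ of graphs with $\mathsf G=\bigcup_i\mathsf G_i$ and, for $i\ne j$, $|V(\mathsf G_i)\cap V(\mathsf G_j)|\le 1$ and $\chi(\mathsf G_i)\cap\chi(\mathsf G_j)=\emptyset$; its members are called parts. A Frankenstein graph is a graph $\mathfrak F$ together with a partition $\{\mathsf C_1,\dots,\mathsf C_c,\mathsf B_1,\dots,\mathsf B_b,\mathsf T_1,\dots,\mathsf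 T_t\}$ ($c,b,t\ge0$, $c+b+t\ge1$) in which the $\mathsf C_i$ are long rainbow odd cycles, the $\mathsf B_i$ are bad pieces and the $\mathsf T_i$ are rainbow trees, such that (F1) $V(\mathsf T_p)\cap V(\mathsf T_q)=\emptyset$ for $p\neq q$, and (F2) no subgraph of $\mathfrak F$ is a rainbow even cycle. *)

From mathcomp Require Import all_boot.
Set Implicit Arguments. Unset Strict Implicit. Unset Printing Implicit Defensive.

Section ColoredGraphs.
Variables (V C : finType).

(* A colored graph: a finite set of pairs (e, alpha), e a 2-element vertex set. *)
Definition cgraph := {set ({set V} * C)}.

Definition edges (G : cgraph) : {set {set V}} := [set p.1 | p in G].
Definition vertices (G : cgraph) : {set V} := \bigcup_(p in G) p.1.
Definition colors (G : cgraph) : {set C} := [set p.2 | p in G].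

Definition is_graph (G : cgraph) : bool :=
  [forall p in G, #|p.1| == 2] &&
  [forall p in G, forall q in G, (p.1 == q.1) ==> (p == q)].

Definition rainbow (G : cgraph) : bool := #|colors G| == #|G|.
Definition almost_rainbow (G : cgraph) : bool := #|colors G|.+1 == #|G|.

Definition seq_edges (x : V) (p : seq V) : {set {set V}} :=
  [set [set e.1; e.2] | e in zip (x :: p) p].

Definition is_path (G : cgraph) (s t : V) : Prop :=
  is_graph G /\
  exists p : seq V, [/\ p != [::], uniq (s :: p), last s p = t &
                        edges G = seq_edges s p].

Definition is_cycle (G : cgraph) : Prop :=
  is_graph G /\
  exists (x : V) (p : seq V), [/\ 2 <= size p, uniq (x :: p) &
                                  edges G = seq_edges x (rcons p x)].

Definition adj (G : cgraph) : rel V := fun u v => [set u; v] \in edges G.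

Definition connected (G : cgraph) : Prop :=
  forall u v, u \in vertices G -> v \in vertices G -> connect (adj G) u v.

Definition is_tree (G : cgraph) : Prop :=
  [/\ is_graph G, connected G & forall H : cgraph, H \subset G -> ~ is_cycle H].

Definition long_rainbow_odd_cycle (G : cgraph) : Prop :=
  [/\ is_cycle G, rainbow G, odd #|G| & 7 <= #|G|].

Definition no_common_edge (G H : cgraph) : Prop := edges G :&: edges H = set0.

(* bad piece: almost rainbow theta graph on >= 6 vertices, union of three
   rainbow paths as in the definition of a theta graph *)
Definition bad_piece (B : cgraph) : Prop :=
  exists (P1 P2 P3 : cgraph) (s t : V),
    [/\ s != t, is_path P1 s t, is_path P2 s t & is_path P3 s t] /\
    [/\ rainbow P1, rainbow P2 & rainbow P3] /\
    [/\ vertices P1 :&: vertices P2 \subset [set s; t],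
        vertices P1 :&: vertices P3 \subset [set s; t] &
        vertices P2 :&: vertices P3 \subset [set s; t]] /\
    [/\ no_common_edge P1 P2, no_common_edge P1 P3 & no_common_edge P2 P3] /\
    [/\ B = P1 :|: P2 :|: P3, is_graph B, almost_rainbow B & 6 <= #|vertices B|].

Definition is_partition (F : cgraph) (parts : seq cgraph) : Prop :=
  F = \bigcup_(X <- parts) X /\
  forall i j, i < size parts -> j < size parts -> i != j ->
    #|vertices (nth set0 parts i) :&: vertices (nth set0 parts j)| <= 1 /\
    colors (nth set0 parts i) :&: colors (nth set0 parts j) = set0.

Definition rainbow_even_cycle (G : cgraph) : Prop :=
  [/\ is_cycle G, rainbow G & ~~ odd #|G|].

Definition frankenstein (F : cgraph) (Cs Bs Ts : seq cgraph) : Prop :=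
  [/\ is_graph F, is_partition F (Cs ++ Bs ++ Ts),
      1 <= size (Cs ++ Bs ++ Ts) &
      [/\ forall X, X \in Cs -> long_rainbow_odd_cycle X,
          forall X, X \in Bs -> bad_piece X &
          forall X, X \in Ts -> is_tree X /\ rainbow X]] /\
  (forall p q, p < size Ts -> q < size Ts -> p != q ->
     vertices (nth set0 Ts p) :&: vertices (nth set0 Ts q) = set0) /\
  (forall H : cgraph, H \subset F -> ~ rainbow_even_cycle H).

End ColoredGraphs.

From mathcomp Require Import all_boot.
Set Implicit Arguments. Unset Strict Implicit. Unset Printing Implicit Defensive.

(* Choose one edge of F of each color: the chosen edges form a rainbow subgraph H.
   Distinct parts have disjoint colors, so an edge x outside H shares its color with
   another edge of its own part, which is therefore a bad piece.  A bad piece is almost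
   rainbow, so all its edges other than x lie in H, and it is a theta graph, so the ends
   of x remain connected once x is deleted.  Hence the ends of every edge of P are
   connected in H, and a shortest s-t walk in H is a rainbow path. *)

Section Walks.
Variables (T : finType) (r : rel T).

Lemma mem_zip (s t : seq T) c d : (c, d) \in zip s t -> (c \in s) && (d \in t).
Proof.
elim: s t => [|x s IHs] [|y t] //=; rewrite inE => /predU1P[[-> ->]|/IHs/andP[cs dt]].
  by rewrite !mem_head.
by rewrite !inE cs dt !orbT.
Qed.

Lemma path_zip s p c d : path r s p -> (c, d) \in zip (s :: p) p -> r c d.
Proof.
elim: p s => [|y p IHp] s //= /andP[rsy path_p]; rewrite inE.
by case/predU1P=> [[-> ->] // | /IHp]; apply.
Qed.

Lemma connect_walk s p :
  (forall c d, (c, d) \in zip (s :: p) p -> connect r c d) -> connect r s (last s p).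
Proof.
elim: p s => [|y p IHp] s walk_r /=; first exact: connect0.
apply: connect_trans (walk_r s y (mem_head _ _)) (IHp y _) => c d cd.
by apply: walk_r; rewrite /= inE cd orbT.
Qed.

Lemma walk_edge_notin s y p c d (e : T) :
  s \notin y :: p -> (c, d) \in zip (y :: p) p -> [set c; d] != [set s; e].
Proof.
move=> s_out /mem_zip/andP[cp dp]; apply: contra s_out => /eqP cd_se.
have : s \in [set c; d] by rewrite cd_se set21.
by case/set2P=> ->; rewrite // inE dp orbT.
Qed.

Lemma connect_walk_around s p a b :
  uniq (s :: p) -> (a, b) \in zip (s :: p) p ->
  (forall c d, (c, d) \in zip (s :: p) p -> [set c; d] != [set a; b] -> r c d) ->
  connect r s a /\ connect r b (last s p).
Proof.
elim: p s => [|y p IHp] s //= /andP[s_out uniq_p]; rewrite inE.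
case/predU1P=> [[-> ->]|ab_p] walk_r.
  split; first exact: connect0.
  apply: connect_walk => c d cd; apply/connect1/walk_r; first by rewrite inE cd orbT.
  exact: walk_edge_notin s_out cd.
have [ya b_last] : connect r y a /\ connect r b (last y p).
  by apply: IHp => // c d cd; apply: walk_r; rewrite inE cd orbT.
split=> //; apply: connect_trans ya; apply/connect1/walk_r; first exact: mem_head.
by rewrite eq_sym; apply: walk_edge_notin s_out ab_p.
Qed.

End Walks.

Section ColoredGraphs.
Variables (V C : finType).
Implicit Types (F G H X B P : cgraph V C) (x y z : {set V} * C) (s t u v : V).

Definition connects G x := forall u v, u \in x.1 -> v \in x.1 -> connect (adj G) u v.

Lemma connect_adjC G u v : connect (adj G) u v = connect (adj G) v u.
Proof.
have adj_sym : symmetric (adj G) by move=> a b; rewrite /adj setUC.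
exact: sym_connect_sym adj_sym u v.
Qed.

Lemma connect_adjS G H u v : G \subset H -> connect (adj G) u v -> connect (adj H) u v.
Proof.
move=> GH; apply: connect_sub => {}u {}v uv; apply: connect1.
by rewrite /adj (subsetP (imsetS _ GH)).
Qed.

Lemma connectsS G H x : G \subset H -> connects G x -> connects H x.
Proof. by move=> GH Gx u v ux vx; apply: connect_adjS GH (Gx u v ux vx). Qed.

Lemma connects_mem G x : x \in G -> #|x.1| = 2 -> connects G x.
Proof.
move=> xG x2 u v ux vx; have [<-|uv] := eqVneq u v; first exact: connect0.
apply: connect1; rewrite /adj; suff <- : x.1 = [set u; v] by apply: imset_f.
apply/eqP; rewrite eq_sym eqEcard cards2 uv x2 andbT.
by apply/subsetP=> w /set2P[]->.
Qed.

Lemma is_graphS G H : G \subset H -> is_graph H -> is_graph G.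
Proof.
move=> GH /andP[/forall_inP H2 /forall_inP Hdistinct]; apply/andP; split.
  by apply/forall_inP=> x xG; apply/H2/(subsetP GH).
apply/forall_inP=> x xG; apply/forall_inP=> y yG.
exact/(forall_inP (Hdistinct x (subsetP GH x xG)))/(subsetP GH).
Qed.

Lemma path_ends_neq P s t : is_path P s t -> s != t.
Proof.
case=> _ [[|y p] [//= _ /andP[s_out _] <- _]].
by apply: contraNneq s_out => ->; apply: mem_last.
Qed.

Lemma connect_path_ends G P s t :
  is_path P s t -> {in P, forall x, connects G x} -> connect (adj G) s t.
Proof.
case=> _ [p [_ _ <- edgesP]] Pconn; apply: connect_walk => c d cd.
have : [set c; d] \in edges P by rewrite edgesP; apply: imset_f cd.
by case/imsetP=> x xP cdx; apply: (Pconn x xP); rewrite -cdx ?set21 ?set22.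
Qed.

Lemma connect_path P G s t : is_path P s t -> P \subset G -> connect (adj G) s t.
Proof.
move=> Ppath PG; apply: (connect_path_ends Ppath) => x xP.
case: Ppath => /andP[/forall_inP P2 _] _.
exact: connects_mem (subsetP PG x xP) (eqP (P2 x xP)).
Qed.

Lemma path_of_connect G s t :
  is_graph G -> s != t -> connect (adj G) s t ->
  exists2 P : cgraph V C, P \subset G & is_path P s t.
Proof.
move=> Ggraph st /connectP[q path_q t_last]; move: st; rewrite {}t_last.
case/shortenP: path_q => p path_p uniq_p _ st.
have sub_edges : seq_edges s p \subset edges G.
  by apply/subsetP=> _ /imsetP[[c d] cd ->]; apply: path_zip path_p cd.
exists [set x in G | x.1 \in seq_edges s p]; first by rewrite setIdE subsetIl.
split; first by apply: is_graphS Ggraph; rewrite setIdE subsetIl.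
exists p; split=> //; first by apply: contraNneq st => ->.
apply/setP=> e; apply/imsetP/idP=> [[x /setIdP[_ xp] ->] // | ep].
by case/imsetP: (subsetP sub_edges e ep) => x xG ex; exists x; rewrite // inE xG -ex.
Qed.

Lemma connects_theta B Pa Pb x s t :
  is_path Pa s t -> is_path Pb s t -> Pa \subset B -> Pb \subset B :\ x -> x \in Pa ->
  connects (B :\ x) x.
Proof.
case=> _ [pa [_ uniq_pa last_pa edges_pa]] Pb_path PaB PbB xPa.
have : x.1 \in seq_edges s pa by rewrite -edges_pa imset_f.
case/imsetP=> -[a b] ab /= x_ab.
have [sa bt] : connect (adj (B :\ x)) s a /\ connect (adj (B :\ x)) b (last s pa).
  apply: connect_walk_around uniq_pa ab _ => c d cd cd_ab.
  have : [set c; d] \in edges Pa by rewrite edges_pa; apply: imset_f cd.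
  case/imsetP=> z zPa cdz; apply/imsetP; exists z => //.
  rewrite !inE (subsetP PaB) // andbT.
  by apply: contra_neq cd_ab => zx; rewrite cdz zx x_ab.
have st := connect_path Pb_path PbB.
have ab_conn : connect (adj (B :\ x)) a b.
  rewrite connect_adjC in sa; rewrite last_pa connect_adjC in bt.
  exact: connect_trans sa (connect_trans st bt).
move=> u v; rewrite x_ab => /set2P[]-> /set2P[]->; rewrite ?connect0 //.
by rewrite connect_adjC.
Qed.

Lemma no_common_edge_notin G H x : no_common_edge G H -> x \in G -> x \notin H.
Proof.
move=> GH xG; apply: contraFN (in_set0 x.1) => xH.
by rewrite -GH inE !imset_f.
Qed.

Lemma bad_piece_almost_rainbow B : bad_piece B -> almost_rainbow B.
Proof. by case=> ? [? [? [? [? [_ [_ [_ [_ []]]]]]]]]. Qed.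

Lemma bad_piece_connects B : bad_piece B -> {in B, forall x, connects (B :\ x) x}.
Proof.
case=> P1 [P2 [P3 [s [t [[_ p1 p2 p3] [_ [_ [[n12 n13 _] [-> _ _ _]]]]]]]]] x.
have theta Pa Pb : is_path Pa s t -> is_path Pb s t ->
    Pa \subset P1 :|: P2 :|: P3 -> Pb \subset P1 :|: P2 :|: P3 -> no_common_edge Pa Pb ->
    x \in Pa -> connects ((P1 :|: P2 :|: P3) :\ x) x.
  move=> Pa_path Pb_path PaB PbB nab xPa; apply: (connects_theta Pa_path Pb_path PaB _ xPa).
  by rewrite subsetD1 PbB (no_common_edge_notin nab xPa).
have sub1 : P1 \subset P1 :|: P2 :|: P3 by rewrite -setUA subsetUl.
have sub2 : P2 \subset P1 :|: P2 :|: P3 by apply: subset_trans (subsetUr P1 P2) (subsetUl _ P3).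
have sub3 : P3 \subset P1 :|: P2 :|: P3 by apply: subsetUr.
have nC P Q : no_common_edge P Q -> no_common_edge Q P by rewrite /no_common_edge setIC.
rewrite !inE; case/orP=> [/orP[xP1|xP2]|xP3].
- exact: theta p1 p2 sub1 sub2 n12 xP1.
- exact: theta p2 p1 sub2 sub1 (nC _ _ n12) xP2.
- exact: theta p3 p1 sub3 sub1 (nC _ _ n13) xP3.
Qed.

Lemma rainbowP G : reflect {in G &, injective snd} (rainbow G).
Proof. exact: imset_injP. Qed.

Lemma rainbowS G H : G \subset H -> rainbow H -> rainbow G.
Proof. by move=> GH /rainbowP Hinj; apply/rainbowP; apply: sub_in2 Hinj; apply/subsetP. Qed.

Lemma almost_rainbow_injD1 X x y :
  almost_rainbow X -> x \in X -> y \in X -> x != y -> x.2 = y.2 ->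
  {in X :\ x &, injective snd}.
Proof.
move=> almostX xX yX xy xy_col; apply/rainbowP; rewrite /rainbow.
have -> : colors (X :\ x) = colors X.
  apply/eqP; rewrite eqEsubset imsetS ?subD1set //=.
  apply/subsetP=> _ /imsetP[z zX ->]; have [->|zx] := eqVneq z x.
    by rewrite xy_col imset_f // !inE eq_sym xy.
  by rewrite imset_f // !inE zx.
by move: almostX; rewrite /almost_rainbow (cardsD1 x X) xX.
Qed.

Definition color_closed (F X : cgraph V C) := {in F, forall y, y.2 \in colors X -> y \in X}.

Definition color_transversal (F : cgraph V C) : cgraph V C :=
  [set x in F | [pick y in F | y.2 == x.2] == Some x].

Lemma color_transversal_sub F : color_transversal F \subset F.
Proof. by rewrite /color_transversal setIdE subsetIl. Qed.

Lemma rainbow_color_transversal F : rainbow (color_transversal F).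
Proof.
apply/rainbowP=> x y /setIdP[_ /eqP pick_x] /setIdP[_ /eqP pick_y] xy.
by move: pick_x; rewrite xy pick_y => -[].
Qed.

Lemma color_transversal_cover F x :
  x \in F -> exists2 y, y \in color_transversal F & y.2 = x.2.
Proof.
move=> xF; case pick_x: [pick y in F | y.2 == x.2] => [y|]; move: (pick_x).
  case: pickP => // z /andP[zF /eqP zx] [zy]; rewrite -zy in pick_x.
  by exists z; rewrite // /color_transversal inE zF zx pick_x eqxx.
by case: pickP => // /(_ x); rewrite xF eqxx.
Qed.

Section Transversal.
Variables (F H : cgraph V C).
Hypotheses (HF : H \subset F) (H_cover : {in F, forall x, exists2 y, y \in H & y.2 = x.2}).

Lemma color_rep_in_part X z : X \subset F -> color_closed F X -> z \in X ->
  exists2 y, y \in H & y \in X /\ y.2 = z.2.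
Proof.
move=> XF closedX zX; have [y yH yz] := H_cover (subsetP XF z zX).
by exists y => //; split=> //; apply: closedX; rewrite ?(subsetP HF) // yz imset_f.
Qed.

Lemma rainbow_part_sub X : X \subset F -> color_closed F X -> rainbow X -> X \subset H.
Proof.
move=> XF closedX /rainbowP injX; apply/subsetP=> z zX.
by have [y yH [yX /injX <-]] := color_rep_in_part XF closedX zX.
Qed.

Lemma almost_rainbow_part_sub X x :
  X \subset F -> color_closed F X -> almost_rainbow X -> x \in X -> x \notin H ->
  X :\ x \subset H.
Proof.
move=> XF closedX almostX xX xH.
have not_x y : y \in H -> y != x by apply: contraTneq => ->.
have [y yH [yX yx]] := color_rep_in_part XF closedX xX.
have xy : x != y by rewrite eq_sym not_x.
have injX := almost_rainbow_injD1 almostX xX yX xy (esym yx).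
apply/subsetP=> z /[dup] zXx /setD1P[_ zX].
have [h hH [hX hz]] := color_rep_in_part XF closedX zX.
by rewrite -(injX h z) // !inE not_x.
Qed.

Lemma connects_part X x :
  X \subset F -> color_closed F X -> x \in X -> #|x.1| = 2 ->
  rainbow X \/ almost_rainbow X /\ {in X, forall y, connects (X :\ y) y} ->
  connects H x.
Proof.
move=> XF closedX xX x2 kindX; have [xH|xH] := boolP (x \in H); first exact: connects_mem.
case: kindX => [rainbowX | [almostX Xconn]].
  by move: xH; rewrite (subsetP (rainbow_part_sub XF closedX rainbowX)).
exact: connectsS (almost_rainbow_part_sub XF closedX almostX xX xH) (Xconn x xX).
Qed.

End Transversal.

Lemma partition_cover F L x : is_partition F L -> x \in F -> exists2 X, X \in L & x \in X.
Proof. by case=> -> _; rewrite bigcup_seq => /bigcupP[X XL xX]; exists X. Qed.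

Lemma partition_sub F L X : is_partition F L -> X \in L -> X \subset F.
Proof. by case=> -> _ XL; rewrite bigcup_seq; apply: bigcup_sup. Qed.

Lemma partition_color_closed F L X : is_partition F L -> X \in L -> color_closed F X.
Proof.
move=> partF XL y yF yX; have [Y YL yY] := partition_cover partF yF.
have [XY|XY] := eqVneq (index X L) (index Y L).
  by rewrite -(nth_index set0 XL) XY nth_index.
have [_ /(_ (index X L) (index Y L))] := partF.
rewrite !index_mem !nth_index // => /(_ XL YL XY)[_ /setP/(_ y.2)].
by rewrite !inE yX imset_f.
Qed.

End ColoredGraphs.

Theorem proposition2p9 (V C : finType) (F : cgraph V C) (Cs Bs Ts : seq (cgraph V C)) :
  frankenstein F Cs Bs Ts ->
  forall (P : cgraph V C) (s t : V), P \subset F -> is_path P s t ->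
  exists P' : cgraph V C, [/\ P' \subset F, is_path P' s t & rainbow P'].
Proof.
move=> [[graphF partF _ [Cs_rainbow Bs_bad Ts_rainbow]] _] P s t PF Ppath.
set H := color_transversal F.
have HF : H \subset F := color_transversal_sub F.
have H_connects : {in F, forall x, connects H x}.
  move=> x xF; have [X XL xX] := partition_cover partF xF.
  apply: (connects_part HF (@color_transversal_cover _ _ F) (partition_sub partF XL)
            (partition_color_closed partF XL) xX).
    by case/andP: graphF => /forall_inP/(_ x xF)/eqP.
  move: XL; rewrite !mem_cat => /orP[/Cs_rainbow[] | /orP[/Bs_bad badX | /Ts_rainbow[]]].
  - by left.
  - by right; split; [apply: bad_piece_almost_rainbow | apply: bad_piece_connects].
  - by left.
have [P' P'H P'path] := path_of_connect (is_graphS HF graphF) (path_ends_neq Ppath)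
  (connect_path_ends Ppath (fun x xP => H_connects x (subsetP PF x xP))).
exists P'; split=> //; first exact: subset_trans P'H HF.
exact: rainbowS P'H (rainbow_color_transversal F).
Qed.
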